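(* Let $\mathcal{S}=(X,\xrightarrow{\Sigma},\le)$ be a WSTS with strong monotonicity whose completion $\widehat{\mathcal{S}}$ is deterministic and has strong-strict monotonicity. For every $I\in\mathrm{Idl}(X)$ and $w\in\Sigma^+$: (1) if $\{J: I\xRightarrow{w}J\}\ne\emptyset$ and $I\in\mathrm{Idl}_n(X)$ for some $n\in\mathbb{N}$, then $w(I)\in\mathrm{Idl}_n(X)$; (2) if $I\subset w(I)$ and $I\in\mathrm{Idl}_n(X)$ for some $n\in\mathbb{N}$, then $w^\infty(I)\in\mathrm{Idl}_{n+1}(X)$.
   Context: A (labeled, ordered) transition system is $\mathcal{S}=(X,\xrightarrow{\Sigma},\le)$: $X$ a set, $\Sigma$ a finite alphabet, $\xrightarrow{a}\subseteq X\times X$ for $a\in\Sigma$, $\le$ a quasi-ordering; relations extend to words ($x\xrightarrow{\varepsilon}x$, $x\xrightarrow{wa}y$ iff $x\xrightarrow{w}x'\xrightarrow{a}y$ for some $x'$). $\mathrm{Post}(x,w)=\{y:x\xrightarrow{w}y\}$, extended to sets by union; $\downarrow D=\{x:\exists y\in D,\,x\le y\}$. WSTS: $\le$ is a wqo and $x\xrightarrow{a}y$, $x'\ge x$ imply $x'\xrightarrow{w}y'$ for some $w\in\Sigma^*$ and $y'\ge y$. Strong monotonicity: $x\xrightarrow{a}y$, $x'\ge x$ imply $x'\xrightarrow{a}y'$ for some $y'\ge y$; strong-strict monotonicity: additionally $x\xrightarrow{a}y$, $x'>x$ imply $x'\xrightarrow{a}y'$ for some $y'>y$. Deterministic: at most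 one $a$-successor for each state and letter. Ideal: nonempty downward-closed directed subset of $X$; $\mathrm{Idl}(X)$ the set of ideals. For downward-closed $D$, $\mathrm{IdealDecomp}(D)$ is the finite set of $\subseteq$-maximal ideals contained in $D$. Completion: $\widehat{\mathcal{S}}=(\mathrm{Idl}(X),\Rightarrow_\Sigma,\subseteq)$ with $I\xRightarrow{a}J$ iff $J\in\mathrm{IdealDecomp}(\downarrow\mathrm{Post}(I,a))$, extended to words. When $\widehat{\mathcal{S}}$ is deterministic, $w(I)$ is the unique $J$ with $I\xRightarrow{w}J$ (when it exists). Acceleration: $w^\infty(I)=\bigcup_{k\in\mathbb{N}}w^k(I)$ if $I\subset w(I)$, else $I$. Levels: $\mathrm{Idl}_0(X)=\mathrm{Idl}(X)$; $\mathrm{Idl}_n(X)=\{\bigcup_iI_i: I_0\subset I_1\subset\cdots,\ I_i\in\mathrm{Idl}_{n-1}(X)\}$ for $n>0$. *)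

From mathcomp Require Import all_boot.
Set Implicit Arguments. Unset Strict Implicit. Unset Printing Implicit Defensive.

Definition subset {X : Type} (A B : X -> Prop) : Prop := forall x, A x -> B x.
Definition strict_subset {X : Type} (A B : X -> Prop) : Prop :=
  subset A B /\ ~ subset B A.
Definition set_eq {X : Type} (A B : X -> Prop) : Prop := forall x, A x <-> B x.

Definition quasi_order {X : Type} (le : X -> X -> Prop) : Prop :=
  (forall x, le x x) /\ (forall x y z, le x y -> le y z -> le x z).
Definition wqo {X : Type} (le : X -> X -> Prop) : Prop :=
  quasi_order le /\
  forall f : nat -> X, exists i j, (i < j)%N /\ le (f i) (f j).

Fixpoint wstep {X Sigma : Type} (step : Sigma -> X -> X -> Prop)
  (w : seq Sigma) (x y : X) : Prop :=
  match w with
  | [::] => x = y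
  | a :: w' => exists x', step a x x' /\ wstep step w' x' y
  end.

Definition WSTS {X Sigma : Type} (step : Sigma -> X -> X -> Prop)
  (le : X -> X -> Prop) : Prop :=
  wqo le /\
  forall a x y x', step a x y -> le x x' ->
    exists w y', wstep step w x' y' /\ le y y'.

Definition strong_monotone {X Sigma : Type} (step : Sigma -> X -> X -> Prop)
  (le : X -> X -> Prop) : Prop :=
  forall a x y x', step a x y -> le x x' -> exists y', step a x' y' /\ le y y'.

Definition downclosure {X : Type} (le : X -> X -> Prop) (D : X -> Prop) : X -> Prop :=
  fun x => exists y, D y /\ le x y.
Definition down_closed {X : Type} (le : X -> X -> Prop) (D : X -> Prop) : Prop :=
  forall x y, le x y -> D y -> D x.
Definition directed {X : Type} (le : X -> X -> Prop) (D : X -> Prop) : Prop :=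
  forall x y, D x -> D y -> exists z, D z /\ le x z /\ le y z.
Definition ideal {X : Type} (le : X -> X -> Prop) (D : X -> Prop) : Prop :=
  (exists x, D x) /\ down_closed le D /\ directed le D.

Definition IdealDecomp {X : Type} (le : X -> X -> Prop) (D : X -> Prop)
  (J : X -> Prop) : Prop :=
  ideal le J /\ subset J D /\
  forall K, ideal le K -> subset J K -> subset K D -> subset K J.

Definition Post {X Sigma : Type} (step : Sigma -> X -> X -> Prop)
  (I : X -> Prop) (a : Sigma) : X -> Prop :=
  fun y => exists x, I x /\ step a x y.

(* the completion: I =a=> J iff J in IdealDecomp(down Post(I,a)),
   on ideals *)
Definition cstep {X Sigma : Type} (step : Sigma -> X -> X -> Prop)
  (le : X -> X -> Prop) (a : Sigma) (I J : X -> Prop) : Prop :=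
  ideal le I /\ IdealDecomp le (downclosure le (Post step I a)) J.

Definition cwstep {X Sigma : Type} (step : Sigma -> X -> X -> Prop)
  (le : X -> X -> Prop) (w : seq Sigma) (I J : X -> Prop) : Prop :=
  wstep (cstep step le) w I J.

Definition completion_deterministic {X Sigma : Type}
  (step : Sigma -> X -> X -> Prop) (le : X -> X -> Prop) : Prop :=
  forall a I J J', cstep step le a I J -> cstep step le a I J' -> set_eq J J'.

Definition completion_strong_strict_monotone {X Sigma : Type}
  (step : Sigma -> X -> X -> Prop) (le : X -> X -> Prop) : Prop :=
  (forall a I J I', cstep step le a I J -> ideal le I' -> subset I I' ->
     exists J', cstep step le a I' J' /\ subset J J') /\
  (forall a I J I', cstep step le a I J -> ideal le I' -> strict_subset I I' ->
     exists J', cstep step le a I' J' /\ strict_subset J J').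

Definition wpow {Sigma : Type} (w : seq Sigma) (k : nat) : seq Sigma :=
  flatten (nseq k w).

Definition winf {X Sigma : Type} (step : Sigma -> X -> X -> Prop)
  (le : X -> X -> Prop) (w : seq Sigma) (I : X -> Prop) : X -> Prop :=
  fun x => exists k J, cwstep step le (wpow w k) I J /\ J x.

Fixpoint IdlN {X : Type} (le : X -> X -> Prop) (n : nat) (D : X -> Prop) : Prop :=
  match n with
  | 0 => ideal le D
  | n'.+1 => exists f : nat -> (X -> Prop),
      (forall i, IdlN le n' (f i)) /\
      (forall i, strict_subset (f i) (f i.+1)) /\
      set_eq D (fun x => exists i, f i x)
  end.

From mathcomp Require Import all_boot.
From mathcomp Require boolp classical_sets.

(** Under determinism the completion step is [I |-> ↓Post(I, a)]: every [y] in
    [↓Post(I, a)] lies in some maximal ideal of [↓Post(I, a)] containing [↓y]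
    (Zorn's lemma), and there is only one such ideal.  This map commutes with
    unions, so it sends the union of a strictly increasing chain of level-[n]
    ideals to the union of the image chain (taken from the first index where
    [Post] is nonempty), which strong-strict monotonicity keeps strictly
    increasing; induction on [n] gives (1).  For (2), the same monotonicity
    makes [(w^k(I))_k] strictly increasing, and its union is [w^oo(I)]. *)

Section Ideals.
Local Set Implicit Arguments.
Local Unset Strict Implicit.

Lemma wstep_cat (L T : Type) (R : L -> T -> T -> Prop) u v x y z :
  wstep R u x y -> wstep R v y z -> wstep R (u ++ v) x z.
Proof.
elim: u x => [|a u IHu] x /=; first by move=> ->.
by move=> [x' [xx' x'y]] yz; exists x'; split=> //; apply: IHu x'y yz.
Qed.

Lemma wpowS (L : Type) (w : seq L) k : wpow w k.+1 = wpow w k ++ w.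
Proof. by rewrite /wpow -flatten_rcons -cats1 -addn1 nseqD. Qed.

Variables (X : Type) (le : X -> X -> Prop).

Lemma set_eqE (A B : X -> Prop) : set_eq A B -> A = B.
Proof. by move=> AB; apply: boolp.funext => x; apply: boolp.propext. Qed.

Lemma chain_subset (f : nat -> X -> Prop) :
  (forall i, subset (f i) (f i.+1)) -> forall i j, i <= j -> subset (f i) (f j).
Proof.
move=> f_mono i j /subnKC <-; elim: (j - i) => [|k IHk] x fx; first by rewrite addn0.
by rewrite addnS; apply/f_mono/IHk.
Qed.

Lemma bigcup_tail (f : nat -> X -> Prop) k :
  (forall i, subset (f i) (f i.+1)) ->
  set_eq (fun x => exists i, f i x) (fun x => exists i, f (k + i) x).
Proof.
move=> f_mono x; split=> [[i fx]|[i fx]]; last by exists (k + i).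
by exists i; apply: (chain_subset f_mono (leq_addl k i)).
Qed.

Lemma IdlN_ideal n D : IdlN le n D -> ideal le D.
Proof.
elim: n D => [//|n IHn] D [f [f_lvl [f_strict /set_eqE ->]]].
have f_ideal i : ideal le (f i) := IHn _ (f_lvl i).
have f_mono : forall i j, i <= j -> subset (f i) (f j).
  by apply: chain_subset => i; case: (f_strict i).
split; [|split].
- by case: (f_ideal 0) => -[x fx] _; exists x, 0.
- move=> x y xy [i fy]; exists i.
  by case: (f_ideal i) => _ [f_dc _]; apply: f_dc xy fy.
- move=> x y [i fx] [j fy].
  have [_ [_ f_dir]] := f_ideal (maxn i j).
  have [z [fz [xz yz]]] := f_dir x y (f_mono _ _ (leq_maxl i j) x fx)
                                     (f_mono _ _ (leq_maxr i j) y fy).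
  by exists z; split=> //; exists (maxn i j).
Qed.

Lemma exists_IdealDecomp_sup (D K : X -> Prop) :
  ideal le K -> subset K D -> exists J, IdealDecomp le D J /\ subset K J.
Proof.
move=> [K_ne [K_dc K_dir]] KD.
(* [P] must contain the empty union of the empty chain, hence the guarded last condition. *)
pose P A := [/\ down_closed le A, directed le A, subset A D
              & (exists x, A x) -> subset K A].
have chainP F : classical_sets.subset F P ->
    classical_sets.total_on F classical_sets.subset ->
    P (classical_sets.bigcup F id).
  move=> FP Ftot; split.
  - move=> x y xy [A FA Ay]; exists A => //.
    by case: (FP A FA) => A_dc _ _ _; apply: A_dc xy Ay.
  - move=> x y [A FA Ax] [B FB By].
    have [AB|BA] := Ftot A B FA FB.
    + have [_ B_dir _ _] := FP B FB.
      by have [z [Bz xyz]] := B_dir x y (AB x Ax) By; exists z; split=> //; exists B.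
    + have [_ A_dir _ _] := FP A FA.
      by have [z [Az xyz]] := A_dir x y Ax (BA y By); exists z; split=> //; exists A.
  - by move=> x [A FA Ax]; case: (FP A FA) => _ _ AD _; apply: AD.
  - move=> [x [A FA Ax]] y Ky; exists A => //.
    by case: (FP A FA) => _ _ _ AK; apply: (AK _ y Ky); exists x.
have [J [[J_dc J_dir JD JK] J_max]] := classical_sets.Zorn_bigcup chainP.
have PK : P K by split=> // _ x.
have J_ne : exists x, J x.
  apply: boolp.contrapT => J_empty; apply: (J_max K _ PK); split.
    by move=> x Jx; case: J_empty; exists x.
  by move=> KJ; case: K_ne => x /KJ Jx; case: J_empty; exists x.
exists J; split; last exact: JK J_ne.
split; first by split.
split=> // K' [K'_ne [K'_dc K'_dir]] JK' K'D x K'x.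
apply: boolp.contrapT => nJx; apply: (J_max K').
  by split=> // K'J; apply/nJx/K'J.
by split=> // _ y Ky; apply/JK'/JK.
Qed.

Hypotheses (le_refl : forall x, le x x)
           (le_trans : forall x y z, le x y -> le y z -> le x z).

Lemma downclosure_down_closed (D : X -> Prop) : down_closed le (downclosure le D).
Proof. by move=> x y xy [z [Dz yz]]; exists z; split=> //; apply: le_trans xy yz. Qed.

Lemma principal_ideal y : ideal le (fun z => le z y).
Proof.
split; first by exists y.
split; first by move=> a b ab; apply: le_trans.
by move=> a b ay yb; exists y.
Qed.

Section Completion.

Variables (Sigma : Type) (step : Sigma -> X -> X -> Prop).

Lemma downclosure_Post_bigcup (f : nat -> X -> Prop) a :
  set_eq (downclosure le (Post step (fun x => exists i, f i x) a))
         (fun y => exists i, downclosure le (Post step (f i) a) y).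
Proof.
move=> y; split.
  by move=> [z [[x [[i fx] xz]] yz]]; exists i, z; split=> //; exists x.
by move=> [i [z [[x [fx xz]] yz]]]; exists z; split=> //; exists x; split=> //; exists i.
Qed.

Hypothesis det : completion_deterministic step le.

Lemma cstep_downclosure_Post a A J :
  cstep step le a A J -> J = downclosure le (Post step A a).
Proof.
move=> AJ; have [A_ideal [_ [J_sub _]]] := AJ.
apply: set_eqE => y; split; first exact: J_sub.
move=> Py.
have [J' [J'_max yJ']] := exists_IdealDecomp_sup (principal_ideal y)
  (fun z zy => downclosure_down_closed zy Py).
by apply/(det AJ (conj A_ideal J'_max))/yJ'.
Qed.

Lemma cstep_Post a A x y :
  ideal le A -> A x -> step a x y ->
  cstep step le a A (downclosure le (Post step A a)).
Proof.
move=> A_ideal Ax xy.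
have yP : downclosure le (Post step A a) y by exists y; split=> //; exists x.
have [J [J_max _]] := exists_IdealDecomp_sup (principal_ideal y)
  (fun z zy => downclosure_down_closed zy yP).
have AJ : cstep step le a A J by [].
by rewrite -(cstep_downclosure_Post AJ).
Qed.

Hypothesis ssm : completion_strong_strict_monotone step le.

Lemma cstep_IdlN a n A J : IdlN le n A -> cstep step le a A J -> IdlN le n J.
Proof.
elim: n A J => [|n IHn] A J; first by move=> _ [_ [] ].
move=> An AJ.
case: An => f [f_lvl [f_strict /set_eqE A_bigcup]].
have f_mono i : subset (f i) (f i.+1) by case: (f_strict i).
have [[y Jy] _] := proj1 (proj2 AJ).
rewrite (cstep_downclosure_Post AJ) A_bigcup in Jy *.
case: Jy => z [[x [[k fx] xz]] _].
have f_step i : cstep step le a (f (k + i)) (downclosure le (Post step (f (k + i)) a)).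
  apply: (cstep_Post _ _ xz); first exact: IdlN_ideal (f_lvl _).
  exact: chain_subset f_mono _ _ (leq_addr i k) x fx.
exists (fun i => downclosure le (Post step (f (k + i)) a)); split; [|split].
- by move=> i; apply: IHn (f_lvl _) (f_step i).
- move=> i; have [J' [fJ' lt_J']] :=
    ssm.2 _ _ _ _ (f_step i) (IdlN_ideal (f_lvl _)) (f_strict _).
  by rewrite addnS -(cstep_downclosure_Post fJ').
- by rewrite (set_eqE (bigcup_tail k f_mono)); apply: downclosure_Post_bigcup.
Qed.

Lemma cwstep_det w A B B' :
  cwstep step le w A B -> cwstep step le w A B' -> B = B'.
Proof.
elim: w A => [|a w IHw] A /=; first by move=> <- <-.
move=> [A1 [AA1 A1B]] [A1' [AA1' A1'B']].
by move: A1'B'; rewrite -(set_eqE (det AA1 AA1')); apply: IHw.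
Qed.

Lemma cwstep_strict w A B A' :
  cwstep step le w A B -> ideal le A' -> strict_subset A A' ->
  exists B', cwstep step le w A' B' /\ strict_subset B B'.
Proof.
elim: w A A' => [|a w IHw] A A' /=; first by move=> -> _ AA'; exists A'.
move=> [A1 [AA1 A1B]] A'_ideal AA'.
have [A1' [A'A1' A1A1']] := ssm.2 _ _ _ _ AA1 A'_ideal AA'.
have [B' [A1'B' BB']] := IHw _ _ A1B (proj1 (proj2 A'A1')) A1A1'.
by exists B'; split=> //; exists A1'.
Qed.

Lemma cwstep_IdlN w n A J : IdlN le n A -> cwstep step le w A J -> IdlN le n J.
Proof.
elim: w A => [|a w IHw] A An /=; first by move=> <-.
by move=> [A1 [AA1 A1J]]; apply: IHw (cstep_IdlN An AA1) A1J.
Qed.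

(* [w^k(I)] as a set, empty when undefined; [winf] is literally its union. *)
Definition witer (w : seq Sigma) (I : X -> Prop) k : X -> Prop :=
  fun x => exists J, cwstep step le (wpow w k) I J /\ J x.

Lemma witerE w I k A : cwstep step le (wpow w k) I A -> witer w I k = A.
Proof.
move=> IA; apply: set_eqE => x; split; last by exists A.
by move=> [J [IJ Jx]]; rewrite (cwstep_det IA IJ).
Qed.

Lemma wpow_strict_chain w I J :
  ideal le I -> cwstep step le w I J -> strict_subset I J ->
  forall k, exists A B, [/\ cwstep step le (wpow w k) I A,
                           cwstep step le w A B & strict_subset A B].
Proof.
move=> I_ideal IJ IJ_lt; elim=> [|k [A [B [IA AB AB_lt]]]]; first by exists I, J.
have B_ideal : ideal le B := cwstep_IdlN (cwstep_IdlN (I_ideal : IdlN le 0 I) IA) AB.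
have [B' [BB' BB'_lt]] := cwstep_strict AB B_ideal AB_lt.
by exists B, B'; split=> //; rewrite wpowS; apply: wstep_cat IA AB.
Qed.

Lemma winf_IdlN w n I J :
  IdlN le n I -> cwstep step le w I J -> strict_subset I J ->
  IdlN le n.+1 (winf step le w I).
Proof.
move=> In IJ IJ_lt; have chain := wpow_strict_chain (IdlN_ideal In) IJ IJ_lt.
exists (witer w I); split; [|split] => // k; have [A [B [IA AB AB_lt]]] := chain k.
  by rewrite (witerE IA); apply: cwstep_IdlN In IA.
have IB : cwstep step le (wpow w k.+1) I B by rewrite wpowS; apply: wstep_cat IA AB.
by rewrite (witerE IA) (witerE IB).
Qed.

End Completion.

End Ideals.

Theorem proposition6 (X : Type) (Sigma : finType)
  (step : Sigma -> X -> X -> Prop) (le : X -> X -> Prop)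
  (HW : WSTS step le) (Hsm : strong_monotone step le)
  (Hdet : completion_deterministic step le)
  (Hssm : completion_strong_strict_monotone step le)
  (I : X -> Prop) (HI : ideal le I) (w : seq Sigma) (Hw : w <> [::]) :
  (forall n J, IdlN le n I -> cwstep step le w I J -> IdlN le n J) /\
  (forall n, (exists J, cwstep step le w I J /\ strict_subset I J) ->
     IdlN le n I -> IdlN le n.+1 (winf step le w I)).
Proof.
have [[[le_refl le_trans] _] _] := HW.
split=> [n J|n [J [IJ IJ_lt]] In]; first exact: cwstep_IdlN.
exact: winf_IdlN In IJ IJ_lt.
Qed.
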